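(* Let $G=(V,E)$ be a simple connected undirected graph with $n\ge 2$ vertices, let $S$ be the output of Algorithm Stage-One on $G$, and let $S'=S\setminus V(G(P_S))$. Then $S'$ has a system of distinct representatives in $N(S')\setminus S$; that is, there is an injective map $\varphi:S'\to N(S')\setminus S$ such that $(x,\varphi(x))\in E$ for every $x\in S'$.
   Context: For $v\in V$, $N(v)=\{u\in V:(u,v)\in E\}$; for $U\subseteq V$, $N(U)=\{v\in V\setminus U: v \text{ has a neighbor in } U\}$. Algorithm Stage-One: set $S_0=\emptyset$ and $h=0$. While $S_h$ is not a dominating set of $G$: increase $h$ by one; for each $v\in V\setminus S_{h-1}$ its active degree is $|N(v)\setminus (S_{h-1}\cup N(S_{h-1}))|$; if the maximum active degree over $V\setminus S_{h-1}$ is positive, let $v_h$ be any vertex of $V\setminus S_{h-1}$ of maximum active degree, otherwise let $v_h$ be any vertex of $V\setminus(S_{h-1}\cup N(S_{h-1}))$; set $S_h=S_{h-1}\cup\{v_h\}$. The output is $S=S_p=\{v_1,\dots,v_p\}$. For $h\in\{1,\dots,p\}$, let $S(h)=N(v_h)\setminus(S_{h-1}\cup N(S_{h-1}))$. The set of tied pairs is $P_S=\{(v_h,v): h\in\{1,\dots,p\},\ v\in S\cap S(h)\}$. $G(P_S)$ is the subgraph of $G$ whose edges are the tied pairs and whose vertices are the endpoints of tied pairs; $V(G(P_S))$ is its vertex set. *)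

From mathcomp Require Import all_boot.
Set Implicit Arguments. Unset Strict Implicit. Unset Printing Implicit Defensive.

Section StageOne.
Variables (T : finType) (e : rel T).

Definition nbr (v : T) : {set T} := [set u | e u v].

Definition nbrS (U : {set T}) : {set T} :=
  [set v | (v \notin U) && [exists u in U, e u v]].

Definition dominating (D : {set T}) : bool := [set: T] \subset D :|: nbrS D.

Definition active_nbrs (D : {set T}) (v : T) : {set T} := nbr v :\: (D :|: nbrS D).
Definition active_deg (D : {set T}) (v : T) : nat := #|active_nbrs D v|.

Definition stage_one_step (D : {set T}) (v : T) : Prop :=
  ~~ dominating D /\ v \notin D /\
  ((exists u, u \notin D /\ 0 < active_deg D u) ->
      forall u, u \notin D -> active_deg D u <= active_deg D v) /\
  (~ (exists u, u \notin D /\ 0 < active_deg D u) -> v \notin D :|: nbrS D).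

(* s = [:: v_1; ...; v_p] is a possible run (with any admissible choices) of
   Stage-One: every v_h is an admissible choice given S_{h-1} = {v_1..v_{h-1}},
   and the loop stops exactly when S_p is dominating. *)
Definition stage_one_run (s : seq T) : Prop :=
  (forall s1 v s2, s = s1 ++ v :: s2 -> stage_one_step [set x in s1] v) /\
  dominating [set x in s].

Definition tied (s : seq T) (a b : T) : Prop :=
  exists s1 s2, s = s1 ++ a :: s2 /\ b \in s /\ b \in active_nbrs [set x in s1] a.

Definition in_tied_graph (s : seq T) (x : T) : Prop :=
  exists y, tied s x y \/ tied s y x.

Definition S' (s : seq T) (x : T) : Prop := x \in s /\ ~ in_tied_graph s x.

Definition nbrS' (s : seq T) (v : T) : Prop :=
  ~ S' s v /\ exists u, S' s u /\ e u v.

End StageOne.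

(* Every v_h of a Stage-One run has an active neighbour: while S_(h-1) is not
   dominating and G has no isolated vertex, the maximum active degree is
   positive, and v_h attains it.  Choose phi(v_h) in S(h).  Since phi(v_h) is
   adjacent to v_h, it lies in S_(k-1) :|: N(S_(k-1)) for every k > h, so it is
   not active for v_k: phi is injective on S.  For x in S', phi(x) is not in S,
   for otherwise (x, phi(x)) would be a tied pair. *)

From mathcomp Require Import all_boot.

Set Implicit Arguments.
Unset Strict Implicit.
Unset Printing Implicit Defensive.

Lemma connected_no_isolated (T : finType) (e : rel T) :
  (forall x y : T, connect e x y) -> 1 < #|T| -> forall w, exists y, e w y.
Proof.
move=> e_conn n_gt1 w.
have [z w_neq_z] : exists z, w != z.
  have [a [b [_ _ a_neq_b]]] := card_gt1P n_gt1.
  by case: (eqVneq w a) => [->|]; [exists b | exists a].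
have /connectP [[|y p] /= p_path z_last] := e_conn w z.
  by rewrite z_last eqxx in w_neq_z.
by case/andP: p_path => wy _; exists y.
Qed.

Section StageOneRun.
Variables (T : finType) (e : rel T).
Hypothesis e_sym : symmetric e.

Lemma nbr_sub_closed_nbrS (D : {set T}) (x : T) :
  x \in D -> nbr e x \subset D :|: nbrS e D.
Proof.
move=> xD; apply/subsetP => u; rewrite inE => ux.
rewrite in_setU inE; case: (u \in D) => //=.
by apply/existsP; exists x; rewrite xD e_sym.
Qed.

Lemma active_deg_gt0_of_not_dominating (D : {set T}) :
  (forall w, exists y, e w y) ->
  ~~ dominating e D -> exists u, u \notin D /\ 0 < active_deg e D u.
Proof.
move=> no_iso /subsetPn [w _]; rewrite in_setU negb_or => /andP [wD wN].
have [y wy] := no_iso w.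
have active_nonempty u v : v \in active_nbrs e D u -> 0 < active_deg e D u.
  by move=> vu; rewrite /active_deg card_gt0; apply/set0Pn; exists v.
case yDN: (y \in D :|: nbrS e D); last first.
  by exists w; split=> //; apply: (active_nonempty _ y); rewrite inE yDN inE e_sym.
move: yDN; rewrite in_setU => /orP [yD|yN].
  by case/negP: wN; rewrite inE wD; apply/existsP; exists y; rewrite yD e_sym.
exists y; split; first by move: yN; rewrite inE => /andP [].
by apply: (active_nonempty _ w); rewrite inE in_setU negb_or wD wN inE.
Qed.

Variable s : seq T.

Definition before (x : T) : {set T} := [set y in take (index x s) s].

Lemma split_at_index (x : T) :
  x \in s -> s = take (index x s) s ++ x :: drop (index x s).+1 s.
Proof.
by move=> xs; rewrite -{1}(cat_take_drop (index x s) s) (drop_nth x) ?index_mem ?nth_index.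
Qed.

Lemma mem_before (x y : T) : x \in s -> index x s < index y s -> x \in before y.
Proof.
move=> xs lt_xy; have -> : x = nth x (take (index y s) s) (index x s).
  by rewrite nth_take // nth_index.
by rewrite inE mem_nth // size_take; case: ifP => // _; rewrite index_mem.
Qed.

Hypothesis run : stage_one_run e s.
Hypothesis no_isolated : forall w, exists y, e w y.

Lemma run_active_nbrs_neq0 (x : T) : x \in s -> exists u, u \in active_nbrs e (before x) x.
Proof.
move=> xs; have [not_dom [_ [max_deg _]]] := run.1 _ _ _ (split_at_index xs).
have [u [uD u_pos]] := active_deg_gt0_of_not_dominating no_isolated not_dom.
have := leq_trans u_pos (max_deg (ex_intro _ u (conj uD u_pos)) u uD).
by rewrite /active_deg card_gt0 => /set0Pn.
Qed.

Definition active_pick (x : T) : T := odflt x [pick u in active_nbrs e (before x) x].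

Lemma active_pickP (x : T) : x \in s -> active_pick x \in active_nbrs e (before x) x.
Proof.
rewrite /active_pick => xs; case: pickP => [//|none] /=.
by have [u] := run_active_nbrs_neq0 xs; rewrite none.
Qed.

Lemma edge_active_pick (x : T) : x \in s -> e x (active_pick x).
Proof. by move/active_pickP; rewrite !inE e_sym => /andP []. Qed.

Lemma active_pick_neq (x y : T) :
  x \in s -> y \in s -> index x s < index y s -> active_pick x != active_pick y.
Proof.
move=> xs ys lt_xy; apply/eqP => eq_pick.
have := active_pickP ys; rewrite -eq_pick inE => /andP [/negP not_closed _].
apply/not_closed/(subsetP (nbr_sub_closed_nbrS (mem_before xs lt_xy))).
by rewrite inE e_sym edge_active_pick.
Qed.

Lemma active_pick_inj_in : {in s &, injective active_pick}.
Proof.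
move=> x y xs ys eq_pick; case: (ltngtP (index x s) (index y s)) => [lt_xy|lt_yx|eq_idx].
- by case/eqP: (active_pick_neq xs ys lt_xy).
- by case/eqP: (active_pick_neq ys xs lt_yx).
- by rewrite -(nth_index x xs) eq_idx nth_index.
Qed.

Lemma active_pick_notin_S (x : T) : S' e s x -> active_pick x \notin s.
Proof.
case=> xs not_tied; apply/negP => pick_s; apply: not_tied.
exists (active_pick x); left; exists (take (index x s) s), (drop (index x s).+1 s).
by rewrite -split_at_index // pick_s active_pickP.
Qed.

End StageOneRun.

Theorem claim1 (T : finType) (e : rel T)
  (e_sym : symmetric e) (e_irr : irreflexive e)
  (e_conn : forall x y : T, connect e x y)
  (n_ge2 : 1 < #|T|)
  (s : seq T) (run : stage_one_run e s) :
  exists phi : T -> T,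
    (forall x y, S' e s x -> S' e s y -> phi x = phi y -> x = y) /\
    (forall x, S' e s x ->
       (nbrS' e s (phi x) /\ phi x \notin s) /\ e x (phi x)).
Proof.
have no_iso := connected_no_isolated e_conn n_ge2.
exists (active_pick e s); split.
  by move=> x y [xs _] [ys _]; apply: (active_pick_inj_in e_sym run no_iso).
move=> x x_S'; have pick_notin_s := active_pick_notin_S e_sym run no_iso x_S'.
have x_edge := edge_active_pick e_sym run no_iso x_S'.1.
have pick_notin_S' : ~ S' e s (active_pick e s x).
  by case=> pick_s _; rewrite pick_s in pick_notin_s.
by do !split => //; exists x.
Qed.
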